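(* Under the Physarum dynamics, let $e=\{u,v\}$ be a horizontal edge, i.e. $|p_u(t)-p_v(t)|\to0$ as $t\to\infty$. Then $D_e$ decays with rate $-1$ and $|Q_e|$ decays with rate at least $-1$.
   Context: Let $G=(N,E)$ be a finite connected undirected graph with two distinct vertices $s_0$ (source) and $s_1$ (sink). Each edge $e$ has a fixed length $L_e>0$. Each edge has a time-dependent diameter $D_e(t)$ with $D_e(0)>0$, and resistance $R_e=L_e/D_e$. At each time $t$, the vertex potentials $p_v$ (normalized by $p_{s_1}=0$) are the solution of $\sum_{u\in\delta(v)}(p_v-p_u)/R_{uv}=b_v$ for all $v$, where $\delta(v)$ is the set of neighbours of $v$, $b_{s_0}=1$, $b_{s_1}=-1$, $b_v=0$ otherwise; for an edge $e=\{u,v\}$ with an arbitrarily fixed orientation $(u,v)$ the current is $Q_e=(p_u-p_v)/R_e=D_e(p_u-p_v)/L_e$. The diameters evolve by $\dot D_e(t)=|Q_e(t)|-D_e(t)$ for all $e\in E$ (the ''Physarum dynamics''). Decay rates: let $r\le 0$. A nonnegative quantity $X(t)$ decays with rate at least $r$ if for every $\varepsilon>0$ there is $A>0$ with $X(t)\le Ae^{(r+\varepsilon)t}$ for all $t\ge0$; it decays with rate at most $r$ if for every $\varepsilon>0$ there is $a>0$ with $X(t)\ge ae^{(r-\varepsilon)t}$ for all $t\ge 0$; it decays with rate $r$ if both hold. *)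

From Stdlib Require Import Reals Lra Lia Arith.
Open Scope R_scope.

Fixpoint sum_upto (f : nat -> R) (m : nat) : R :=
  match m with
  | O => 0
  | S k => sum_upto f k + f k
  end.

(* Graph: vertices 0..n-1, edges 0..m-1, edge i joins eu i and ev i
   (this also fixes the orientation (eu i, ev i) of edge i). *)
Inductive Reach (m : nat) (eu ev : nat -> nat) (a : nat) : nat -> Prop :=
  | reach_refl : Reach m eu ev a a
  | reach_step : forall i w x, (i < m)%nat -> Reach m eu ev a w ->
      ((eu i = w /\ ev i = x) \/ (ev i = w /\ eu i = x)) -> Reach m eu ev a x.

Definition simple_connected_graph (n m : nat) (eu ev : nat -> nat) : Prop :=
  (forall i, (i < m)%nat -> (eu i < n)%nat /\ (ev i < n)%nat /\ eu i <> ev i) /\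
  (forall i j, (i < m)%nat -> (j < m)%nat -> i <> j ->
     ~ ((eu i = eu j /\ ev i = ev j) \/ (eu i = ev j /\ ev i = eu j))) /\
  (forall a c, (a < n)%nat -> (c < n)%nat -> Reach m eu ev a c).

Definition supply (s0 s1 v : nat) : R :=
  if Nat.eqb v s0 then 1 else if Nat.eqb v s1 then -1 else 0.

Definition net_out (m : nat) (eu ev : nat -> nat) (L Dt : nat -> R)
    (pt : nat -> R) (v : nat) : R :=
  sum_upto (fun i =>
    if Nat.eqb (eu i) v then (pt v - pt (ev i)) / (L i / Dt i)
    else if Nat.eqb (ev i) v then (pt v - pt (eu i)) / (L i / Dt i)
    else 0) m.

Definition current (eu ev : nat -> nat) (L : nat -> R) (D : nat -> R -> R)
    (p : R -> nat -> R) (i : nat) (t : R) : R :=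
  D i t * (p t (eu i) - p t (ev i)) / L i.

Definition decays_rate_at_least (X : R -> R) (r : R) : Prop :=
  forall eps, 0 < eps -> exists A, 0 < A /\
    forall t, 0 <= t -> X t <= A * exp ((r + eps) * t).

Definition decays_rate_at_most (X : R -> R) (r : R) : Prop :=
  forall eps, 0 < eps -> exists a, 0 < a /\
    forall t, 0 <= t -> a * exp ((r - eps) * t) <= X t.

Definition decays_rate (X : R -> R) (r : R) : Prop :=
  decays_rate_at_least X r /\ decays_rate_at_most X r.

(* Write Q_e = D_e (p_u - p_v) / L_e for the current of the edge e.
   1. Kirchhoff bound: with nonnegative diameters every current satisfies
      |Q_e| <= 1.  Pairing the Kirchhoff equations with the indicator of
      the superlevel set {p >= max (p_u, p_v)} (a discrete divergence
      theorem) shows that the flow across this cut, which contains |Q_e|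
      as one of its nonnegative terms, is at most the enclosed supply 1.
   2. Comparison for f' = h - f: the weighted function (f - B) e^t is
      monotone (mean value theorem), and right continuity of f at 0 lets
      the comparison start at time 0.  With h = |Q_i| >= 0 this gives
      D_i(t) >= D_i(0) e^(-t) > 0 for every edge, so step 1 applies, and
      with h <= 1 it gives the bound D_e <= 1 + D_e(0).
   3. On a horizontal edge, |Q_e| <= eps D_e for large t, so
      D_e e^((1 - eps) t) is eventually nonincreasing; together with the
      lower bound of step 2 this gives the decay rate -1 of D_e, and
      |Q_e| <= D_e for large t transfers the upper rate to |Q_e|. *)

From Stdlib Require Import Reals Lra Lia.
Open Scope R_scope.

Lemma sum_ext (f g : nat -> R) (m : nat) :
  (forall k, (k < m)%nat -> f k = g k) -> sum_upto f m = sum_upto g m.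
Proof.
induction m as [|m IH]; simpl; intros Hfg; [reflexivity|].
rewrite IH by (intros; apply Hfg; lia). now rewrite Hfg by lia.
Qed.

Lemma sum_plus (f g : nat -> R) (m : nat) :
  sum_upto (fun k => f k + g k) m = sum_upto f m + sum_upto g m.
Proof. induction m as [|m IH]; simpl; [ring|]. rewrite IH; ring. Qed.

Lemma sum_scal (a : R) (f : nat -> R) (m : nat) :
  a * sum_upto f m = sum_upto (fun k => a * f k) m.
Proof. induction m as [|m IH]; simpl; [ring|]. rewrite <- IH; ring. Qed.

Lemma sum_zero (m : nat) : sum_upto (fun _ => 0) m = 0.
Proof. induction m as [|m IH]; simpl; [reflexivity|]. rewrite IH; ring. Qed.

Lemma sum_swap (f : nat -> nat -> R) (n m : nat) :
  sum_upto (fun v => sum_upto (fun i => f i v) m) n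
  = sum_upto (fun i => sum_upto (fun v => f i v) n) m.
Proof.
induction n as [|n IH]; simpl; [now rewrite sum_zero|].
now rewrite IH, <- sum_plus.
Qed.

Lemma sum_delta (a : nat) (x : R) (n : nat) :
  sum_upto (fun v => if Nat.eqb a v then x else 0) n
  = if Nat.ltb a n then x else 0.
Proof.
induction n as [|n IH]; simpl; [now destruct a|]. rewrite IH.
destruct (Nat.ltb_spec a n), (Nat.ltb_spec a (S n)), (Nat.eqb_spec a n);
  try lia; lra.
Qed.

Lemma sum_le (f g : nat -> R) (m : nat) :
  (forall k, (k < m)%nat -> f k <= g k) -> sum_upto f m <= sum_upto g m.
Proof.
induction m as [|m IH]; simpl; intros Hfg; [lra|].
assert (f m <= g m) by (apply Hfg; lia).
assert (sum_upto f m <= sum_upto g m) by (apply IH; intros; apply Hfg; lia).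
lra.
Qed.

Lemma term_le_sum (f : nat -> R) (m e : nat) :
  (forall k, (k < m)%nat -> 0 <= f k) -> (e < m)%nat -> f e <= sum_upto f m.
Proof.
induction m as [|m IH]; simpl; intros Hf He; [lia|].
assert (0 <= sum_upto f m).
{ rewrite <- (sum_zero m). apply sum_le. intros; apply Hf; lia. }
assert (0 <= f m) by (apply Hf; lia).
destruct (Nat.eq_dec e m) as [->|Hem]; [lra|].
assert (f e <= sum_upto f m) by (apply IH; [intros; apply Hf; lia|lia]).
lra.
Qed.

(* Dividing by the resistance [l / d] is multiplying by the conductance
   [d / l]; this also holds for [d = 0] because [/ 0 = 0] ([Rinv_0]). *)
Lemma div_resistance (x l d : R) : 0 < l -> x / (l / d) = d * x / l.
Proof.
intros Hl. destruct (Req_dec d 0) as [->|Hd].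
- unfold Rdiv. rewrite Rinv_0, Rmult_0_r, Rinv_0. ring.
- field. lra.
Qed.

Lemma divergence_pairing (n m : nat) (eu ev : nat -> nat) (L Dt P w : nat -> R) :
  (forall i, (i < m)%nat -> (eu i < n)%nat /\ (ev i < n)%nat /\ eu i <> ev i) ->
  sum_upto (fun v => w v * net_out m eu ev L Dt P v) n
  = sum_upto (fun i => (w (eu i) - w (ev i))
                       * ((P (eu i) - P (ev i)) / (L i / Dt i))) m.
Proof.
intros Hedges. unfold net_out.
erewrite sum_ext by (intros; apply sum_scal). rewrite sum_swap.
apply sum_ext. intros i Hi. destruct (Hedges i Hi) as [Hu [Hv Huv]].
set (flow := (P (eu i) - P (ev i)) / (L i / Dt i)).
transitivity (sum_upto (fun v => (if Nat.eqb (eu i) v then w (eu i) * flow else 0)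
                 + (if Nat.eqb (ev i) v then - (w (ev i) * flow) else 0)) n).
- apply sum_ext. intros v _. unfold flow.
  destruct (Nat.eqb_spec (eu i) v), (Nat.eqb_spec (ev i) v); try lia;
    subst; unfold Rdiv; ring.
- rewrite sum_plus, !sum_delta.
  destruct (Nat.ltb_spec (eu i) n), (Nat.ltb_spec (ev i) n); try lia. ring.
Qed.

Lemma supply_pairing_le_1 (n s0 s1 : nat) (w : nat -> R) :
  (forall v, 0 <= w v <= 1) ->
  sum_upto (fun v => w v * supply s0 s1 v) n <= 1.
Proof.
intros Hw.
apply Rle_trans with (sum_upto (fun v => if Nat.eqb s0 v then 1 else 0) n).
- apply sum_le. intros v _. specialize (Hw v). unfold supply.
  destruct (Nat.eqb_spec v s0), (Nat.eqb_spec s0 v), (Nat.eqb_spec v s1);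
    try lia; lra.
- rewrite sum_delta. destruct (Nat.ltb s0 n); lra.
Qed.

Definition above (c x : R) : R := if Rle_dec c x then 1 else 0.

(* Flow never runs into a superlevel set of the potential. *)
Lemma above_gap_nonneg (c a b : R) : 0 <= (above c a - above c b) * (a - b).
Proof. unfold above. destruct (Rle_dec c a), (Rle_dec c b); nra. Qed.

Lemma above_gap_at_max (a b : R) :
  (above (Rmax a b) a - above (Rmax a b) b) * (a - b) = Rabs (a - b).
Proof.
unfold above, Rmax. destruct (Rle_dec a b).
- destruct (Rle_dec b a), (Rle_dec b b); try lra.
  + replace a with b by lra. replace (b - b) with 0 by ring. rewrite Rabs_R0. ring.
  + rewrite Rabs_left1 by lra. ring.
- destruct (Rle_dec a a), (Rle_dec a b); try lra.
  rewrite Rabs_pos_eq by lra. ring.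
Qed.

(* Every Kirchhoff current with nonnegative conductances is at most 1 in
   absolute value: the flow across the cut at the higher endpoint of the
   edge is at most the supply 1 enclosed by the cut. *)
Lemma kirchhoff_current_le_1 (n m : nat) (eu ev : nat -> nat)
    (L Dt P : nat -> R) (s0 s1 e : nat) :
  (forall i, (i < m)%nat -> (eu i < n)%nat /\ (ev i < n)%nat /\ eu i <> ev i) ->
  (forall i, (i < m)%nat -> 0 < L i) ->
  (forall i, (i < m)%nat -> 0 <= Dt i) ->
  (forall v, (v < n)%nat -> net_out m eu ev L Dt P v = supply s0 s1 v) ->
  (e < m)%nat ->
  Rabs (Dt e * (P (eu e) - P (ev e)) / L e) <= 1.
Proof.
intros Hedges HL HD HK He.
set (w := fun v => above (Rmax (P (eu e)) (P (ev e))) (P v)).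
set (term := fun i => (w (eu i) - w (ev i)) * ((P (eu i) - P (ev i)) / (L i / Dt i))).
assert (Hterm : forall i, (i < m)%nat ->
          term i = (w (eu i) - w (ev i)) * (P (eu i) - P (ev i)) * (Dt i / L i)).
{ intros i Hi. unfold term. rewrite div_resistance by auto.
  field. specialize (HL i Hi). lra. }
assert (Hterm_nonneg : forall i, (i < m)%nat -> 0 <= term i).
{ intros i Hi. rewrite Hterm by exact Hi. apply Rmult_le_pos; [unfold w; apply above_gap_nonneg|].
  specialize (HL i Hi). specialize (HD i Hi).
  apply Rmult_le_pos; [lra|left; apply Rinv_0_lt_compat; lra]. }
assert (Hterm_e : term e = Rabs (Dt e * (P (eu e) - P (ev e)) / L e)).
{ rewrite Hterm by exact He. unfold w. rewrite above_gap_at_max.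
  specialize (HL e He). specialize (HD e He). unfold Rdiv.
  rewrite !Rabs_mult, Rabs_inv, (Rabs_pos_eq (Dt e)), (Rabs_pos_eq (L e)) by lra.
  ring. }
rewrite <- Hterm_e.
apply Rle_trans with (sum_upto term m); [now apply term_le_sum|].
unfold term. rewrite <- (divergence_pairing n) by exact Hedges.
rewrite (sum_ext _ (fun v => w v * supply s0 s1 v)) by (intros; now rewrite HK).
apply supply_pairing_le_1. intros v. unfold w, above. destruct Rle_dec; lra.
Qed.

Lemma current_le_of_small_gap (d gap l c : R) :
  0 <= d -> 0 < l -> Rabs gap <= c * l -> Rabs (d * gap / l) <= c * d.
Proof.
intros Hd Hl Hgap. unfold Rdiv.
rewrite !Rabs_mult, Rabs_inv, (Rabs_pos_eq d), (Rabs_pos_eq l) by lra.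
pose proof (Rinv_0_lt_compat l Hl).
replace (c * d) with (d * (c * l) * / l) by (field; lra).
apply Rmult_le_compat_r; [lra|]. now apply Rmult_le_compat_l.
Qed.

Lemma exp_le (x y : R) : x <= y -> exp x <= exp y.
Proof. intros [Hlt| ->]; [left; now apply exp_increasing|lra]. Qed.

Lemma derivable_pt_lim_exp_scale (c x : R) :
  derivable_pt_lim (fun y => exp (c * y)) x (c * exp (c * x)).
Proof.
replace (c * exp (c * x)) with (exp (c * x) * c) by ring.
apply (derivable_pt_lim_comp (fun y => c * y) exp x c (exp (c * x))).
- pose proof (derivable_pt_lim_mult (fct_cte c) id x 0 1
    (derivable_pt_lim_const c x) (derivable_pt_lim_id x)) as Hlin.
  unfold fct_cte, id in Hlin. replace (0 * x + c * 1) with c in Hlin by ring.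
  exact Hlin.
- apply derivable_pt_lim_exp.
Qed.

Lemma derivable_pt_lim_weighted (f : R -> R) (c x d : R) :
  derivable_pt_lim f x d ->
  derivable_pt_lim (fun y => f y * exp (c * y)) x ((d + c * f x) * exp (c * x)).
Proof.
intros Hf.
replace ((d + c * f x) * exp (c * x)) with (d * exp (c * x) + f x * (c * exp (c * x)))
  by ring.
apply (derivable_pt_lim_mult f (fun y => exp (c * y))); [exact Hf|].
apply derivable_pt_lim_exp_scale.
Qed.

Lemma weighted_nonincreasing (f f' : R -> R) (c a b : R) :
  a <= b ->
  (forall x, a <= x <= b -> derivable_pt_lim f x (f' x)) ->
  (forall x, a <= x <= b -> f' x + c * f x <= 0) ->
  f b * exp (c * b) <= f a * exp (c * a).
Proof.
intros [Hab| ->] Hder Hsign; [|lra].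
destruct (MVT_cor2 (fun y => f y * exp (c * y))
                   (fun y => (f' y + c * f y) * exp (c * y)) a b Hab)
  as [x [Hmvt Hx]].
- intros x Hx. apply derivable_pt_lim_weighted, Hder, Hx.
- assert (f' x + c * f x <= 0) by (apply Hsign; lra).
  assert (0 <= exp (c * x) * (b - a)) by (pose proof (exp_pos (c * x)); nra).
  simpl in Hmvt. nra.
Qed.

(** Right continuity at time 0 (the form in which the initial condition
    of the dynamics is given). *)

Definition right_continuous_at0 (f : R -> R) : Prop :=
  forall eps, 0 < eps -> exists delta, 0 < delta /\
    forall t, 0 <= t < delta -> Rabs (f t - f 0) < eps.

Lemma continuous_right_continuous_at0 (g : R -> R) :
  continuity_pt g 0 -> right_continuous_at0 g.
Proof.
intros Hg eps Heps. destruct (Hg eps Heps) as [delta [Hdelta Hclose]].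
exists delta. split; [exact Hdelta|]. intros t Ht.
destruct (Req_dec t 0) as [->|Ht0].
- rewrite Rminus_diag_eq, Rabs_R0 by reflexivity. exact Heps.
- apply (Hclose t). split; [split; [exact I|auto]|].
  simpl. unfold R_dist. rewrite Rminus_0_r, Rabs_pos_eq; lra.
Qed.

Lemma right_continuous_at0_mult (f g : R -> R) :
  right_continuous_at0 f -> right_continuous_at0 g ->
  right_continuous_at0 (fun s => f s * g s).
Proof.
intros Hf Hg eps Heps.
set (Mf := Rabs (f 0) + 1). set (Mg := Rabs (g 0) + 1).
assert (0 < Mf) by (unfold Mf; pose proof (Rabs_pos (f 0)); lra).
assert (0 < Mg) by (unfold Mg; pose proof (Rabs_pos (g 0)); lra).
destruct (Hf (eps / (2 * Mg))) as [d1 [Hd1 Hf1]].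
{ apply Rdiv_lt_0_compat; lra. }
destruct (Hg (Rmin 1 (eps / (2 * Mf)))) as [d2 [Hd2 Hg2]].
{ apply Rmin_glb_lt; [lra|apply Rdiv_lt_0_compat; lra]. }
exists (Rmin d1 d2). split; [now apply Rmin_glb_lt|]. intros t Ht.
assert (Hft : Rabs (f t - f 0) < eps / (2 * Mg))
  by (apply Hf1; pose proof (Rmin_l d1 d2); lra).
assert (Hgt : Rabs (g t - g 0) < Rmin 1 (eps / (2 * Mf)))
  by (apply Hg2; pose proof (Rmin_r d1 d2); lra).
pose proof (Rmin_l 1 (eps / (2 * Mf))). pose proof (Rmin_r 1 (eps / (2 * Mf))).
assert (Hgbound : Rabs (g t) <= Mg).
{ unfold Mg. replace (g t) with ((g t - g 0) + g 0) by ring.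
  pose proof (Rabs_triang (g t - g 0) (g 0)). lra. }
assert (Hsplit : f t * g t - f 0 * g 0 = (f t - f 0) * g t + f 0 * (g t - g 0)) by ring.
rewrite Hsplit. eapply Rle_lt_trans; [apply Rabs_triang|]. rewrite !Rabs_mult.
assert (Hfirst : Rabs (f t - f 0) * Rabs (g t) < eps / 2).
{ replace (eps / 2) with (eps / (2 * Mg) * Mg) by (field; lra).
  pose proof (Rabs_pos (f t - f 0)). pose proof (Rabs_pos (g t)). nra. }
assert (Hsecond : Rabs (f 0) * Rabs (g t - g 0) <= eps / 2).
{ replace (eps / 2) with (eps / (2 * Mf) * Mf) by (field; lra).
  pose proof (Rabs_pos (f 0)). pose proof (Rabs_pos (g t - g 0)).
  assert (Rabs (f 0) <= Mf) by (unfold Mf; lra). nra. }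
lra.
Qed.

Lemma right_continuous_at0_weighted (f : R -> R) (c : R) :
  right_continuous_at0 f -> right_continuous_at0 (fun s => f s * exp (c * s)).
Proof.
intros Hf. apply right_continuous_at0_mult; [exact Hf|].
apply continuous_right_continuous_at0, derivable_continuous_pt.
exists (c * exp (c * 0)). apply derivable_pt_lim_exp_scale.
Qed.

Lemma right_limit_ge (g : R -> R) (t K : R) :
  right_continuous_at0 g -> 0 < t ->
  (forall s, 0 < s <= t -> K <= g s) -> K <= g 0.
Proof.
intros Hg Ht Hbound. destruct (Rle_or_lt K (g 0)) as [|Hlt]; [assumption|].
destruct (Hg (K - g 0)) as [delta [Hdelta Hclose]]; [lra|].
set (s := Rmin t (delta / 2)).
assert (0 < s) by (apply Rmin_glb_lt; lra).
assert (s <= t) by apply Rmin_l.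
assert (s <= delta / 2) by apply Rmin_r.
specialize (Hclose s ltac:(lra)). specialize (Hbound s ltac:(lra)).
apply Rabs_def2 in Hclose. lra.
Qed.

Lemma weighted_nonincreasing_from0 (f f' : R -> R) (c t : R) :
  right_continuous_at0 f ->
  (forall x, 0 < x -> derivable_pt_lim f x (f' x)) ->
  (forall x, 0 < x -> f' x + c * f x <= 0) ->
  0 <= t -> f t * exp (c * t) <= f 0.
Proof.
intros Hrc Hder Hsign [Ht| <-].
- replace (f 0) with (f 0 * exp (c * 0)) by (rewrite Rmult_0_r, exp_0; ring).
  apply (right_limit_ge (fun s => f s * exp (c * s)) t);
    [now apply right_continuous_at0_weighted|exact Ht|].
  intros s Hs. apply (weighted_nonincreasing f f');
    [lra| intros; apply Hder; lra | intros; apply Hsign; lra].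
- rewrite Rmult_0_r, exp_0. lra.
Qed.

(* Affine images [a f + b] keep right continuity and differentiability;
   they reduce lower and upper comparisons to a single lemma. *)
Lemma right_continuous_at0_affine (f : R -> R) (a b : R) :
  right_continuous_at0 f -> right_continuous_at0 (fun s => a * f s + b).
Proof.
intros Hf eps Heps.
assert (Ha : 0 < Rabs a + 1) by (pose proof (Rabs_pos a); lra).
destruct (Hf (eps / (Rabs a + 1))) as [delta [Hdelta Hclose]].
{ now apply Rdiv_lt_0_compat. }
exists delta. split; [exact Hdelta|]. intros t Ht.
replace (a * f t + b - (a * f 0 + b)) with (a * (f t - f 0)) by ring.
rewrite Rabs_mult. specialize (Hclose t Ht).
apply Rle_lt_trans with ((Rabs a + 1) * Rabs (f t - f 0)).
- pose proof (Rabs_pos (f t - f 0)). nra.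
- replace eps with ((Rabs a + 1) * (eps / (Rabs a + 1))) by (field; lra).
  now apply Rmult_lt_compat_l.
Qed.

Lemma derivable_pt_lim_affine (f : R -> R) (a b x d : R) :
  derivable_pt_lim f x d -> derivable_pt_lim (fun s => a * f s + b) x (a * d).
Proof.
intros Hf.
pose proof (derivable_pt_lim_plus (mult_real_fct a f) (fct_cte b) x (a * d) 0
  (derivable_pt_lim_scal f a x d Hf) (derivable_pt_lim_const b x)) as Hsum.
unfold mult_real_fct, fct_cte, plus_fct in Hsum. now rewrite Rplus_0_r in Hsum.
Qed.

Lemma rate_at_least_of_eventual_bound (X : R -> R) (r B : R) :
  r <= 0 -> 0 <= B -> (forall t, 0 <= t -> X t <= B) ->
  (forall eps, 0 < eps -> exists T A, 0 <= T /\ 0 < A /\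
     forall t, T <= t -> X t <= A * exp ((r + eps) * t)) ->
  decays_rate_at_least X r.
Proof.
intros Hr HB Hbound Hlate eps Heps.
destruct (Hlate eps Heps) as [T [A [HT [HA HXlate]]]].
pose proof (exp_pos (- (r * T))).
exists (A + B * exp (- (r * T))). split; [nra|]. intros t Ht.
assert (Hextra : 0 <= B * exp (- (r * T)) * exp ((r + eps) * t))
  by (pose proof (exp_pos ((r + eps) * t)); apply Rmult_le_pos; nra).
destruct (Rle_or_lt T t) as [Hlate_t|Hearly].
- specialize (HXlate t Hlate_t). nra.
- assert (Hexp : 1 <= exp (- (r * T)) * exp ((r + eps) * t)).
  { rewrite <- exp_plus, <- exp_0. apply exp_le. nra. }
  specialize (Hbound t Ht). pose proof (exp_pos ((r + eps) * t)). nra.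
Qed.

Lemma rate_at_most_of_lower_bound (X : R -> R) (r a : R) :
  0 < a -> (forall t, 0 <= t -> a * exp (r * t) <= X t) ->
  decays_rate_at_most X r.
Proof.
intros Ha Hlow eps Heps. exists a. split; [exact Ha|]. intros t Ht.
apply Rle_trans with (a * exp (r * t)); [|now apply Hlow].
apply Rmult_le_compat_l; [lra|]. apply exp_le. nra.
Qed.

(** A scalar Physarum equation [f' = h - f] on [(0, oo)], with [f] right
    continuous at 0; [h] plays the role of the current [|Q_e|]. *)

Section PhysarumEquation.

Variables f h : R -> R.
Hypothesis f_ode : forall x, 0 < x -> derivable_pt_lim f x (h x - f x).
Hypothesis f_rc : right_continuous_at0 f.

Lemma physarum_comparison (a B t : R) :
  (forall x, 0 < x -> a * (h x - B) <= 0) -> 0 <= t ->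
  a * (f t - B) * exp t <= a * (f 0 - B).
Proof.
intros Hsign Ht.
pose proof (weighted_nonincreasing_from0 (fun s => a * f s + - (a * B))
  (fun s => a * (h s - f s)) 1 t) as Hweighted.
rewrite Rmult_1_l in Hweighted.
replace (a * (f t - B)) with (a * f t + - (a * B)) by ring.
replace (a * (f 0 - B)) with (a * f 0 + - (a * B)) by ring.
apply Hweighted.
- now apply right_continuous_at0_affine.
- intros x Hx. apply derivable_pt_lim_affine, f_ode, Hx.
- intros x Hx. specialize (Hsign x Hx).
  replace (a * (h x - f x) + 1 * (a * f x + - (a * B))) with (a * (h x - B)) by ring.
  exact Hsign.
- exact Ht.
Qed.

Lemma physarum_lower_bound (t : R) :
  (forall x, 0 < x -> 0 <= h x) -> 0 <= t -> f 0 * exp (- t) <= f t.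
Proof.
intros Hh Ht.
pose proof (physarum_comparison (-1) 0 t) as Hcmp.
assert (Hgrow : f 0 <= f t * exp t).
{ enough (- (f t * exp t) <= - f 0) by lra.
  replace (- (f t * exp t)) with (-1 * (f t - 0) * exp t) by ring.
  replace (- f 0) with (-1 * (f 0 - 0)) by ring.
  apply Hcmp; [intros x Hx; specialize (Hh x Hx); lra|exact Ht]. }
assert (Hinv : exp t * exp (- t) = 1) by (rewrite <- exp_plus, Rplus_opp_r; apply exp_0).
pose proof (exp_pos (- t)).
replace (f t) with (f t * exp t * exp (- t)) by (rewrite Rmult_assoc, Hinv; ring).
now apply Rmult_le_compat_r; [lra|].
Qed.

Lemma physarum_upper_bound (B t : R) :
  0 <= B -> (forall x, 0 < x -> h x <= B) -> 0 <= t -> f t <= B + Rabs (f 0).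
Proof.
intros HB Hh Ht.
assert (Hcmp : 1 * (f t - B) * exp t <= 1 * (f 0 - B)).
{ apply physarum_comparison; [intros x Hx; specialize (Hh x Hx); lra|exact Ht]. }
assert (1 <= exp t) by (rewrite <- exp_0; apply exp_le, Ht).
pose proof (Rle_abs (f 0)). pose proof (Rabs_pos (f 0)).
destruct (Rle_or_lt (f t) B) as [|Habove]; [lra|].
assert (0 <= (f t - B) * (exp t - 1)) by (apply Rmult_le_pos; lra).
nra.
Qed.

Lemma physarum_eventual_decay (c T t : R) :
  0 < T -> (forall x, T <= x -> h x <= c * f x) -> T <= t ->
  f t * exp ((1 - c) * t) <= f T * exp ((1 - c) * T).
Proof.
intros HT Hsmall Ht.
apply (weighted_nonincreasing f (fun x => h x - f x)); [exact Ht| |].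
- intros x Hx. apply f_ode. lra.
- intros x Hx. specialize (Hsmall x ltac:(lra)).
  replace (h x - f x + (1 - c) * f x) with (h x - c * f x) by ring. lra.
Qed.

Lemma physarum_horizontal_decay :
  (forall x, 0 <= x -> 0 <= h x <= 1) -> 0 < f 0 ->
  (forall c, 0 < c -> exists T, 0 < T /\ forall x, T <= x -> h x <= c * f x) ->
  decays_rate f (-1) /\ decays_rate_at_least h (-1).
Proof.
intros Hh Hf0 Hhor.
assert (Hh_nonneg : forall x, 0 < x -> 0 <= h x) by (intros x Hx; apply Hh; lra).
assert (Hh_le1 : forall x, 0 < x -> h x <= 1) by (intros x Hx; apply Hh; lra).
set (B := 1 + Rabs (f 0)).
assert (HB : 0 < B) by (unfold B; pose proof (Rabs_pos (f 0)); lra).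
assert (Hbounded : forall t, 0 <= t -> f t <= B)
  by (intros t Ht; now apply (physarum_upper_bound 1); [lra| |]).
assert (Hf_least : decays_rate_at_least f (-1)).
{ apply (rate_at_least_of_eventual_bound f (-1) B); [lra|lra|exact Hbounded|].
  intros eps Heps. destruct (Hhor eps Heps) as [T [HT Hsmall]].
  exists T, (B * exp T). split; [lra|]. split; [pose proof (exp_pos T); nra|].
  intros t Ht.
  pose proof (physarum_eventual_decay eps T t HT Hsmall Ht) as Hdecay.
  assert (Hstart : f T * exp ((1 - eps) * T) <= B * exp T).
  { pose proof (exp_pos ((1 - eps) * T)).
    assert (exp ((1 - eps) * T) <= exp T) by (apply exp_le; nra).
    pose proof (Hbounded T ltac:(lra)). nra. }
  assert (Hinv : exp ((1 - eps) * t) * exp ((-1 + eps) * t) = 1)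
    by (rewrite <- exp_plus; replace ((1 - eps) * t + (-1 + eps) * t) with 0 by ring;
        apply exp_0).
  pose proof (exp_pos ((-1 + eps) * t)).
  replace (f t) with (f t * exp ((1 - eps) * t) * exp ((-1 + eps) * t))
    by (rewrite Rmult_assoc, Hinv; ring).
  apply Rmult_le_compat_r; lra. }
split; [split; [exact Hf_least|]|].
- apply (rate_at_most_of_lower_bound f (-1) (f 0)); [exact Hf0|].
  intros t Ht. replace (-1 * t) with (- t) by ring.
  now apply physarum_lower_bound.
- apply (rate_at_least_of_eventual_bound h (-1) 1); [lra|lra|apply Hh|].
  intros eps Heps. destruct (Hf_least eps Heps) as [A [HA HfA]].
  destruct (Hhor 1 Rlt_0_1) as [T [HT Hsmall]].
  exists T, A. split; [lra|]. split; [exact HA|]. intros t Ht.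
  specialize (Hsmall t Ht). specialize (HfA t ltac:(lra)). lra.
Qed.

End PhysarumEquation.

Theorem mainTheorem12
  (n m : nat) (eu ev : nat -> nat) (L : nat -> R) (s0 s1 : nat)
  (D : nat -> R -> R) (p : R -> nat -> R) (e : nat) :
  simple_connected_graph n m eu ev ->
  (s0 < n)%nat -> (s1 < n)%nat -> s0 <> s1 ->
  (forall i, (i < m)%nat -> 0 < L i) ->
  (forall i, (i < m)%nat -> 0 < D i 0) ->
  (* potentials: normalized Kirchhoff solution at every time t >= 0 *)
  (forall t, 0 <= t -> p t s1 = 0 /\
     forall v, (v < n)%nat ->
       net_out m eu ev L (fun i => D i t) (p t) v = supply s0 s1 v) ->
  (* Physarum dynamics: D_e' = |Q_e| - D_e for t > 0, D_e right-continuous at 0 *)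
  (forall i, (i < m)%nat -> forall t, 0 < t ->
     derivable_pt_lim (D i) t (Rabs (current eu ev L D p i t) - D i t)) ->
  (forall i, (i < m)%nat -> forall eps, 0 < eps -> exists delta, 0 < delta /\
     forall t, 0 <= t < delta -> Rabs (D i t - D i 0) < eps) ->
  (* e is a horizontal edge *)
  (e < m)%nat ->
  (forall eps, 0 < eps -> exists T, forall t, T <= t ->
     Rabs (p t (eu e) - p t (ev e)) < eps) ->
  decays_rate (fun t => D e t) (-1) /\
  decays_rate_at_least (fun t => Rabs (current eu ev L D p e t)) (-1).
Proof.
intros [Hedges _] _ _ _ HL HD0 HK Hode Hrc He Hhor.
set (Q := fun i t => Rabs (current eu ev L D p i t)).
assert (Dpos : forall i t, (i < m)%nat -> 0 <= t -> 0 < D i t).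
{ intros i t Hi Ht.
  pose proof (Rmult_lt_0_compat _ _ (HD0 i Hi) (exp_pos (- t))).
  pose proof (physarum_lower_bound (D i) (Q i) (Hode i Hi) (Hrc i Hi) t
                (fun x _ => Rabs_pos _) Ht). lra. }
apply (physarum_horizontal_decay (D e) (Q e) (Hode e He) (Hrc e He));
  [|exact (HD0 e He)|].
- intros t Ht. split; [apply Rabs_pos|].
  apply (kirchhoff_current_le_1 n m eu ev L (fun i => D i t) (p t) s0 s1 e);
    [exact Hedges|exact HL| |now apply HK|exact He].
  intros i Hi. left. now apply Dpos.
- intros c Hc. destruct (Hhor (c * L e)) as [T Hgap]; [specialize (HL e He); nra|].
  exists (Rmax 1 T). split; [pose proof (Rmax_l 1 T); lra|]. intros t Ht.
  pose proof (Rmax_l 1 T). pose proof (Rmax_r 1 T).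
  apply current_le_of_small_gap; [left; apply Dpos; [exact He|lra]|now apply HL|].
  left. apply Hgap. lra.
Qed.
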